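(* Let $G$ be a connected abelian Lie group with Lie algebra $\mathfrak{g}$, a real vector space of dimension $n$, and exponential map $\exp:\mathfrak{g}\to G$ (the universal covering homomorphism). Let $T$ be the maximal torus of $G$, $\mathfrak{t}=\exp^{-1}(T)$ its Lie algebra, and $\Gamma=\ker\exp$, a lattice in $\mathfrak{t}$; let $v_1,\ldots,v_t$ be a basis of $\Gamma$. Let $v_{t+1},\ldots,v_{n+1}$ be elements of $\mathfrak{g}$. Then the subsemigroup of $G$ generated by $\exp(v_{t+1}),\ldots,\exp(v_{n+1})$ is dense in $G$ if and only if the following two conditions hold: (a) the vectors $v_1,\ldots,v_n$ form a basis of $\mathfrak{g}$ over $\mathbb{R}$; (b) writing $v_{n+1}=\alpha_1v_1+\cdots+\alpha_nv_n$, we have $\alpha_i<0$ for $i=t+1,\ldots,n$, and $1,\alpha_1,\ldots,\alpha_n$ are linearly independent over $\mathbb{Q}$.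
   Context: The maximal torus of a connected abelian Lie group is its unique maximal compact subgroup (a compact connected abelian Lie group). *)

From HB Require Import structures.
From mathcomp Require Import all_boot all_order all_algebra.
From mathcomp Require Import all_classical all_reals all_analysis.
From mathcomp Require Import zify.
Set Implicit Arguments. Unset Strict Implicit. Unset Printing Implicit Defensive.
Import Order.TTheory GRing.Theory Num.Theory.
Import numFieldNormedType.Exports.
Local Open Scope ring_scope.
Local Open Scope classical_set_scope.

(* Model of a connected abelian Lie group G of dimension n:
   its Lie algebra g = 'rV[R]_n, exp : g -> G the universal covering
   homomorphism, so G = g / Gamma with Gamma = ker exp, the Z-span of
   R-linearly independent vectors b_0, ..., b_(t-1).  A subset of G is
   represented by its (Gamma-invariant) preimage in g; since exp is an
   open continuous surjection, a subset of G is dense iff its preimage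
   in g is dense. *)

Definition zspan (R : realType) (n t : nat) (b : 'I_t -> 'rV[R]_n)
  : set 'rV[R]_n :=
  [set x | exists z : 'I_t -> int, x = \sum_(i < t) (z i)%:~R *: b i].

(* Preimage under exp of the subsemigroup of G generated by
   exp(w_0), ..., exp(w_(m-1)): all nonempty products
   exp(w_0)^k_0 ... exp(w_(m-1))^k_(m-1) (k not all zero), lifted to g
   and translated by Gamma = ker exp. *)
Definition semigroup_preimage (R : realType) (n t m : nat)
  (b : 'I_t -> 'rV[R]_n) (w : 'I_m -> 'rV[R]_n) : set 'rV[R]_n :=
  [set x | exists k : 'I_m -> nat, (exists j, k j != 0%N) /\
     exists2 g, zspan b g & x = \sum_(j < m) (k j)%:R *: w j + g].

Definition Q_lin_indep (R : realType) (k : nat) (x : 'I_k -> R) : Prop :=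
  forall c : 'I_k -> rat,
    \sum_(i < k) ratr (c i) * x i = 0 -> forall i, c i = 0.

Lemma gen_idx_subproof (n t : nat) (j : 'I_(n.+1 - t)) : (t + j < n.+1)%N.
Proof. have := ltn_ord j; lia. Qed.

Definition gen_idx (n t : nat) (j : 'I_(n.+1 - t)) : 'I_n.+1 :=
  Ordinal (gen_idx_subproof j).

From HB Require Import structures.
From mathcomp Require Import all_boot all_order all_algebra.
From mathcomp Require Import all_classical all_reals all_analysis.
From mathcomp Require Import zify ring lra.
Set Implicit Arguments. Unset Strict Implicit. Unset Printing Implicit Defensive.
Import Order.TTheory GRing.Theory Num.Theory.
Import numFieldNormedType.Exports.
Local Open Scope ring_scope.
Local Open Scope classical_set_scope.

(* Density of the semigroup fails as soon as a nonzero linear functional [L]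
   maps it away from an open interval.  If [v_1, ..., v_n] do not span, an [L]
   killing them takes values in [Z L(v_(n+1))]; if [alpha_j >= 0] for some
   [j > t], the [j]-th coordinate is nonnegative on the semigroup; and an
   integer relation among [1, alpha_1, ..., alpha_n] yields an integer-valued
   [L].  Conversely, by Kronecker's theorem the points [m alpha + p] with [m]
   a large natural number and [p] integral are dense in [R^n]; for [m] large
   the [p_k] with [k > t] are nonnegative, so [sum_k p_k v_k + m v_(n+1)] lies
   in the semigroup. *)

Section Kronecker.
Variable R : realType.

Definition fract (x : R) := x - (Num.floor x)%:~R.

Lemma fract_ge0 x : 0 <= fract x.
Proof. by rewrite /fract subr_ge0 floor_le. Qed.

Lemma fract_lt1 x : fract x < 1.
Proof. rewrite /fract; have := floorD1_gt x; rewrite intrD; lra. Qed.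

Lemma truncn_scale_fract_lt (K : nat) x : (0 < K)%N ->
  (Num.truncn (K%:R * fract x) < K)%N.
Proof.
move=> K0; rewrite truncn_lt_nat ?mulr_ge0 ?fract_ge0 //.
by rewrite -[X in _ < X]mulr1 ltr_pM2l ?fract_lt1 ?ltr0n.
Qed.

Lemma fract_close (K : nat) x y : (0 < K)%N ->
  Num.truncn (K%:R * fract x) = Num.truncn (K%:R * fract y) ->
  `|fract y - fract x| < K%:R^-1.
Proof.
move=> K0 eq_xy; have K0' : 0 < K%:R :> R by rewrite ltr0n.
have /andP[lx ux] := truncn_itv (mulr_ge0 (ler0n _ K) (fract_ge0 x)).
have /andP[ly uy] := truncn_itv (mulr_ge0 (ler0n _ K) (fract_ge0 y)).
rewrite eq_xy -natr1 in lx ux; rewrite -natr1 in uy.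
have : `|K%:R * (fract y - fract x)| < 1 by rewrite ltr_norml; apply/andP; split; lra.
by rewrite normrM gtr0_norm // -ltr_pdivlMl // mulr1.
Qed.

(* Dirichlet's simultaneous approximation, by pigeonhole on the boxes of side
   [1/(N+1)] containing the fractional parts of [m b] for [m <= (N+1)^d]. *)
Lemma dirichlet_approx d (b : 'I_d -> R) (N : nat) :
  exists2 m : nat, (0 < m)%N & exists p : 'I_d -> int,
    forall i, `|m%:R * b i - (p i)%:~R| < N.+1%:R^-1.
Proof.
pose box (m : 'I_(N.+1 ^ d).+1) : {ffun 'I_d -> 'I_N.+1} :=
  [ffun i => inord (Num.truncn (N.+1%:R * fract (m%:R * b i)))].
have [a [c [lt_ac eq_box]]] : exists a c : 'I_(N.+1 ^ d).+1, (a < c)%N /\ box a = box c.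
  have /injectivePn[a [c ne_ac eq_box]] : ~~ injectiveb box.
    by apply/injectiveP => /leq_card; rewrite card_ffun !card_ord ltnn.
  case: (ltngtP a c) => [ac|ca|/val_inj ac]; first by exists a, c.
    by exists c, a.
  by rewrite ac eqxx in ne_ac.
exists (c - a)%N; first by rewrite subn_gt0.
exists (fun i => Num.floor (c%:R * b i) - Num.floor (a%:R * b i)) => i.
have := congr1 (fun f : {ffun 'I_d -> 'I_N.+1} => val (f i)) eq_box.
rewrite /= !ffunE !inordK ?truncn_scale_fract_lt // => /(fract_close (ltn0Sn N)).
congr (_ < _); congr `|_|; rewrite natrB ?(ltnW lt_ac) // /fract intrB; ring.
Qed.

(* The integer vectors [a] index the characters [x |-> exp(2 pi i a.x)] of the
   torus [R^d/Z^d]; none of the nontrivial ones is trivial on all [beta j]. *)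
Definition no_torus_character r d (beta : 'I_r -> 'I_d -> R) :=
  forall a : 'I_d -> int, (exists i, a i != 0) ->
  exists j, \sum_i (a i)%:~R * beta j i \isn't a Num.int.

Lemma no_torus_character_coord0 r d (beta : 'I_r -> 'I_d.+1 -> R) :
  no_torus_character beta ->
  exists j0, forall m : nat, (0 < m)%N -> m%:R * beta j0 ord0 \isn't a Num.int.
Proof.
move=> hbeta; apply: contrapT => no_j0.
have [M hM] : {M : 'I_r -> nat &
    forall j, (0 < M j)%N /\ (M j)%:R * beta j ord0 \is a Num.int}.
  apply: (@choice _ _ (fun j (m : nat) =>
    (0 < m)%N /\ m%:R * beta j ord0 \is a Num.int)) => j.
  apply: contrapT => no_m; apply: no_j0; exists j => m m0.
  by apply/negP => int_m; apply: no_m; exists m.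
pose D := (\prod_j M j)%N.
have D0 : (0 < D)%N by rewrite prodn_gt0 // => j; case: (hM j).
have [|j /negP] := hbeta (fun i => if i == ord0 then D%:Z else 0).
  by exists ord0; rewrite eqxx; lia.
apply; rewrite big_ord_recl eqxx big1 ?addr0; last first.
  by move=> i _; rewrite eq_sym (negbTE (neq_lift _ _)) mul0r.
rewrite /D (bigD1 j) //= -pmulrn natrM mulrAC.
by apply: rpredM; [case: (hM j) | exact: natr_int].
Qed.

(* The quotient map [R^(d+1) -> R^d] killing the line spanned by [(1, -g)]. *)
Definition line_proj d (g : 'I_d -> R) (x : 'I_d.+1 -> R) (i : 'I_d) :=
  x (lift ord0 i) + x ord0 * g i.

Lemma no_torus_character_proj r d (beta : 'I_r -> 'I_d.+1 -> R)
    (g : 'I_d -> R) :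
  no_torus_character beta ->
  no_torus_character (fun j : 'I_r.+1 =>
    if unlift ord0 j is Some k then line_proj g (beta k) else g).
Proof.
move=> hbeta a' [i0 ai0]; apply: contrapT => all_int.
have int_j j : \sum_i (a' i)%:~R *
    (if unlift ord0 j is Some k then line_proj g (beta k) else g) i \is a Num.int.
  by apply/negP => nj; apply: all_int; exists j; apply/negP.
have /intrP[c hc] := int_j ord0; rewrite unlift_none in hc.
pose a i := if unlift ord0 i is Some k then a' k else c.
have [|j /negP] := hbeta a; first by exists (lift ord0 i0); rewrite /a liftK.
apply; have := int_j (lift ord0 j); rewrite liftK /line_proj.
congr (_ \is a _); rewrite big_ord_recl /a unlift_none.
under [in RHS]eq_bigr do rewrite liftK.
under [in LHS]eq_bigr do rewrite mulrDr.
rewrite big_split /= -hc addrC mulr_suml; congr (_ + _).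
by apply: eq_bigr => i _; ring.
Qed.

(* The witness is [J = floor (X 0 / lam 0)]: it brings the first coordinate
   of [X - J lam] into [[0, lam 0)] and moves the others by less than [|lam|]. *)
Lemma approx_modulo_line d (X lam : 'I_d.+1 -> R) (e : R) :
  lam ord0 != 0 -> (forall k, `|lam k| < e / 2) ->
  (forall i, `|X (lift ord0 i) - X ord0 * (lam (lift ord0 i) / lam ord0)| < e / 2) ->
  exists J : int, forall k, `|X k - J%:~R * lam k| < e.
Proof.
move=> lam0 lam_small hX; pose s := X ord0 / lam ord0.
have off_line k : `|X k - s * lam k| < e / 2.
  case: (unliftP ord0 k) => [i ->|->]; first by rewrite /s mulrAC -mulrA.
  rewrite /s divfK // subrr normr0.
  exact: le_lt_trans (normr_ge0 _) (lam_small ord0).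
exists (Num.floor s) => k.
have /andP[sJ Js] := floor_itv s; rewrite intrD in Js.
have -> : X k - (Num.floor s)%:~R * lam k =
    (X k - s * lam k) + (s - (Num.floor s)%:~R) * lam k by ring.
apply: le_lt_trans (ler_normD _ _) _.
have : `|(s - (Num.floor s)%:~R) * lam k| <= `|lam k|.
  by rewrite normrM ger0_norm ?subr_ge0 // ler_piMl //; lra.
have := off_line k; have := lam_small k; lra.
Qed.

(* Induction on [d]: Dirichlet gives a small [lam = m beta_j0 - q] with
   [lam 0 <> 0]; approximate in the quotient by the line of [lam] using the
   induction hypothesis, then correct by an integer multiple of [lam]. *)
Lemma kronecker_approx r d (beta : 'I_r -> 'I_d -> R) :
  no_torus_character beta -> forall (y : 'I_d -> R) (e : R), 0 < e ->
  exists (z : 'I_r -> int) (p : 'I_d -> int),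
    forall i, `|\sum_j (z j)%:~R * beta j i + (p i)%:~R - y i| < e.
Proof.
elim: d r beta => [|d IH] r beta hbeta y e e0.
  by exists (fun=> 0), (fun=> 0); case.
have [j0 hj0] := no_torus_character_coord0 hbeta.
have e20 : 0 < e / 2 by lra.
have [N _ /(_ N (leqnn N)) /= hN] := near_infty_natSinv_lt (PosNum e20).
have [m m0 [q hq]] := dirichlet_approx (beta j0) N.
pose lam i := m%:R * beta j0 i - (q i)%:~R.
have lam_small i : `|lam i| < e / 2 by exact: lt_trans (hq i) hN.
have lam0 : lam ord0 != 0.
  apply: contraNneq (hj0 m m0) => /eqP; rewrite subr_eq0 => /eqP ->.
  exact: intr_int.
pose g i := - (lam (lift ord0 i) / lam ord0).
have [z' [p' hz']] := IH _ _ (no_torus_character_proj g hbeta) (line_proj g y) _ e20.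
pose P k : int := if unlift ord0 k is Some i then p' i else z' ord0.
pose X k := \sum_j (z' (lift ord0 j))%:~R * beta j k + (P k)%:~R - y k.
have [J hJ] : exists J : int, forall k, `|X k - J%:~R * lam k| < e.
  apply: approx_modulo_line lam_small _ => // i.
  rewrite (_ : _ - _ = line_proj g X i); last by rewrite /line_proj /g; ring.
  move: (hz' i); congr (`|_| < _).
  rewrite big_ord_recl unlift_none /line_proj /X /P liftK unlift_none.
  under eq_bigr do rewrite liftK /line_proj mulrDr.
  rewrite big_split /= (eq_bigr _ (fun j _ => mulrA _ _ (g i))) -mulr_suml; ring.
exists (fun j => z' (lift ord0 j) - J * (j == j0)%:R * m%:Z).
exists (fun k => P k + J * q k) => k.
move: (hJ k); congr (`|_| < _).
under eq_bigr do rewrite intrB mulrBl.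
rewrite sumrB (_ : \sum_j (J * (j == j0)%:R * m)%:~R * beta j k =
    J%:~R * (m%:R * beta j0 k)).
  by rewrite /X /lam intrD intrM; ring.
rewrite (bigD1 j0) //= big1 => [|j /negbTE ->]; last by rewrite mulr0 !mul0r.
by rewrite eqxx addr0 mulr1 intrM mulrA.
Qed.

(* The integer shift produced by [kronecker_approx] may be negative; adding a
   large multiple [mm * K] of a Dirichlet denominator makes it as large as
   desired at the price of a small error. *)
Lemma kronecker_approx_nat d (al : 'I_d -> R) :
  no_torus_character (fun _ : 'I_1 => al) ->
  forall (c : 'I_d -> R) (e : R), 0 < e -> forall M : nat,
  exists2 m : nat, (M <= m)%N & exists p : 'I_d -> int,
    forall i, `|m%:R * al i + (p i)%:~R - c i| < e.
Proof.
move=> hal c e e0 M; have e20 : 0 < e / 2 by lra.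
have [z [p hz]] := kronecker_approx hal c e20.
set K := (`|z ord0|%N + M)%N.
have [N _ /(_ N (leqnn N)) /= hN] := near_infty_natSinv_lt (PosNum e20).
have [mm mm0 [q hq]] := dirichlet_approx (fun i => K%:R * al i) N.
have KmmK : (K <= mm * K)%N by rewrite leq_pmull.
have shift_ge0 : (0 <= z ord0 + (mm * K)%N%:Z)%R by rewrite /K in KmmK *; lia.
exists (absz (z ord0 + (mm * K)%N%:Z)); first by rewrite /K in KmmK *; lia.
exists (fun i => p i - q i) => i.
rewrite natr_absz (ger0_norm shift_ge0) intrD intrB -pmulrn natrM.
have -> : ((z ord0)%:~R + mm%:R * K%:R) * al i + ((p i)%:~R - (q i)%:~R) - c i
   = ((z ord0)%:~R * al i + (p i)%:~R - c i) + (mm%:R * (K%:R * al i) - (q i)%:~R)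
   by ring.
apply: le_lt_trans (ler_normD _ _) _.
have := hz i; have := lt_trans (hq i) hN; rewrite big_ord1; lra.
Qed.

Lemma Q_lin_indepZ k (x : 'I_k -> R) :
  Q_lin_indep x <->
  forall c : 'I_k -> int, \sum_i (c i)%:~R * x i = 0 -> forall i, c i = 0.
Proof.
split=> [hx c hc i | hx c hc i].
  apply/eqP; rewrite -(intr_eq0 rat) (hx (fun i => (c i)%:~R)) //.
  by rewrite -[RHS]hc; apply: eq_bigr => j _; rewrite rmorph_int.
pose D : int := \prod_j denq (c j).
pose e j : int := numq (c j) * \prod_(l | l != j) denq (c l).
have eE j : ratr (c j) * D%:~R = (e j)%:~R :> R.
  rewrite /D (bigD1 j) //= /e !intrM.
  rewrite -[in ratr (c j)](divq_num_den (c j)) fmorph_div !rmorph_int.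
  have dn : (denq (c j))%:~R != 0 :> R by rewrite intr_eq0 denq_neq0.
  by field.
have /eqP : e i = 0.
  apply: hx; transitivity (D%:~R * \sum_j ratr (c j) * x j); last first.
    by rewrite hc mulr0.
  by rewrite mulr_sumr; apply: eq_bigr => j _; rewrite -eE; ring.
have den_neq0 : \prod_(l | l != i) denq (c l) != 0.
  by apply/prodf_neq0 => l _; exact: denq_neq0.
by rewrite /e mulf_eq0 (negbTE den_neq0) orbF numq_eq0 => /eqP.
Qed.

Lemma Q_lin_indep_no_torus_character d (al : 'I_d -> R) :
  Q_lin_indep (fun i : 'I_d.+1 => if unlift ord0 i is Some j then al j else 1) ->
  no_torus_character (fun _ : 'I_1 => al).
Proof.
move=> /Q_lin_indepZ hal a [i0 ai0]; exists ord0; apply/negP => /intrP[z hz].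
pose c i := if unlift ord0 i is Some k then a k else - z.
suff /(_ (lift ord0 i0)) : forall i, c i = 0.
  by rewrite /c liftK => /eqP; rewrite (negbTE ai0).
apply: hal; rewrite big_ord_recl unlift_none mulr1 /c unlift_none.
under eq_bigr do rewrite liftK.
by rewrite hz intrN addNr.
Qed.

End Kronecker.

Section DenseRowVectors.
Variables (R : realType) (n : nat).
Implicit Types (S : set 'rV[R]_n) (r : 'cV[R]_n).

Lemma rV_ballE (x y : 'rV[R]_n) (e : R) :
  ball x e y <-> 0 < e /\ forall j, `|x 0 j - y 0 j| < e.
Proof.
rewrite /ball /=; split=> -[e0 xy]; split=> //.
  by move=> j; have := xy 0 j; rewrite /ball.
by move=> i j; rewrite /ball /= (ord1 i); exact: xy.
Qed.

Lemma dense_rVP S : dense S <->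
  forall (x : 'rV[R]_n) (e : R), 0 < e -> exists2 s, S s & forall j, `|x 0 j - s 0 j| < e.
Proof.
split=> [dS x e e0 | dS O [x Ox] oO].
  have ball_xe : open (ball x e) by exact: ball_open.
  have [s [/rV_ballE[_ xs] Ss]] := dS _ (ex_intro _ x (ballxx x e0)) ball_xe.
  by exists s.
have /nbhs_ballP[e e0 xeO] : nbhs x O by exact: open_nbhs_nbhs.
have [s Ss xs] := dS x e e0.
by exists s; split=> //; apply: xeO; apply/rV_ballE.
Qed.

Lemma mulmx_lin_comb p (c : 'I_p -> R) (u : 'I_p -> 'rV[R]_n) r :
  ((\sum_j c j *: u j) *m r) 0 0 = \sum_j c j * (u j *m r) 0 0.
Proof.
rewrite mulmx_suml summxE; apply: eq_bigr => j _.
by rewrite -scalemxAl mxE.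
Qed.

Lemma mulmx_entry_le p (d : 'rV[R]_n) (B : 'M[R]_(n, p)) (e : R) j :
  (forall k, `|d 0 k| <= e) -> `|(d *m B) 0 j| <= e * \sum_k `|B k j|.
Proof.
move=> de; rewrite mxE mulr_sumr; apply: le_trans (ler_norm_sum _ _ _) _.
by apply: ler_sum => k _; rewrite normrM ler_wpM2r.
Qed.

Lemma dense_mulmx (A : 'M[R]_n) S :
  A \in unitmx -> dense S -> dense [set d *m A | d in S].
Proof.
move=> unitA /dense_rVP dS; apply/dense_rVP => x e e0.
pose B := \sum_j \sum_k `|A k j| + 1.
have B_gt0 : 0 < B.
  suff : 0 <= \sum_j \sum_k `|A k j| by rewrite /B; lra.
  by apply: sumr_ge0 => j _; exact: sumr_ge0.
have [|d Sd xd] := dS (x *m invmx A) (e / B); first exact: divr_gt0.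
exists (d *m A) => [|j]; first by exists d.
have -> : x 0 j - (d *m A) 0 j = ((x *m invmx A - d) *m A) 0 j.
  by rewrite mulmxBl mulmxKV // !mxE.
have close k : `|(x *m invmx A - d) 0 k| <= e / B.
  by rewrite (_ : (x *m invmx A - d) 0 k = (x *m invmx A) 0 k - d 0 k) ?ltW // !mxE.
apply: le_lt_trans (mulmx_entry_le A j close) _.
rewrite -[X in _ < X](divfK (lt0r_neq0 B_gt0)) ltr_pM2l ?divr_gt0 //.
suff : \sum_k `|A k j| <= \sum_l \sum_k `|A k l| by rewrite /B; lra.
rewrite [X in _ <= X](bigD1 j) //= lerDl.
by apply: sumr_ge0 => l _; exact: sumr_ge0.
Qed.

Lemma not_dense_gap S r (a b : R) : a < b -> r != 0 ->
  (forall x, S x -> ~ (a < (x *m r) 0 0 < b)) -> ~ dense S.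
Proof.
move=> ab r0 hS /dense_rVP dS.
have [j rj0] : exists j, r j 0 != 0.
  apply/existsP; apply: contraNT r0 => /existsPn rj0; apply/eqP/matrixP => i k.
  by rewrite (ord1 k) mxE; apply/eqP/negbNE/rj0.
pose x1 := ((a + b) / 2 / r j 0) *: delta_mx 0 j : 'rV[R]_n.
have x1r : (x1 *m r) 0 0 = (a + b) / 2 by rewrite -scalemxAl -rowE !mxE divfK.
pose B := \sum_k `|r k 0| + 1.
have B_ge : \sum_k `|r k 0| < B by rewrite /B ltrDl.
have B_gt0 : 0 < B by apply: le_lt_trans B_ge; exact: sumr_ge0.
have rho_gt0 : 0 < (b - a) / 2 / B by rewrite !divr_gt0 //; lra.
have [s Ss x1s] := dS x1 _ rho_gt0.
apply: (hS s Ss).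
have : `|((x1 - s) *m r) 0 0| < (b - a) / 2.
  have close k : `|(x1 - s) 0 k| <= (b - a) / 2 / B.
    by rewrite (_ : (x1 - s) 0 k = x1 0 k - s 0 k) ?ltW // !mxE.
  apply: le_lt_trans (mulmx_entry_le r 0 close) _.
  by rewrite -[X in _ < X](divfK (lt0r_neq0 B_gt0)) ltr_pM2l.
have -> : ((x1 - s) *m r) 0 0 = (x1 *m r) 0 0 - (s *m r) 0 0.
  by rewrite mulmxBl !mxE.
rewrite x1r ltr_norml; lra.
Qed.

Lemma not_dense_int S r : r != 0 ->
  (forall x, S x -> (x *m r) 0 0 \is a Num.int) -> ~ dense S.
Proof.
move=> r0 hS; apply: (not_dense_gap (a := 1 / 3) (b := 2 / 3) _ r0); first lra.
move=> x /hS /intrP[m ->] /andP[m_gt m_lt].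
have m_gt0 : (0 < m)%R by rewrite -(ltr0z R); lra.
have : 1 <= m%:~R :> R by rewrite ler1z; lia.
lra.
Qed.

Lemma not_dense_ge0 S r : r != 0 -> (forall x, S x -> 0 <= (x *m r) 0 0) -> ~ dense S.
Proof.
move=> r0 hS; apply: (not_dense_gap (a := -2) (b := -1) _ r0); first lra.
by move=> x /hS ? /andP[]; lra.
Qed.

End DenseRowVectors.

Section SemigroupPreimage.
Variables (R : realType) (n t m : nat) (b : 'I_t -> 'rV[R]_n) (w : 'I_m -> 'rV[R]_n).
Variable r : 'cV[R]_n.

Lemma semigroup_preimage_mulmx x : semigroup_preimage b w x ->
  exists (k : 'I_m -> nat) (z : 'I_t -> int),
    (x *m r) 0 0 = \sum_j (k j)%:R * (w j *m r) 0 0 + \sum_i (z i)%:~R * (b i *m r) 0 0.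
Proof. by case=> k [_ [g [z ->] ->]]; exists k, z; rewrite mulmxDl mxE !mulmx_lin_comb. Qed.

Lemma semigroup_preimage_int x :
  (forall i, (b i *m r) 0 0 \is a Num.int) -> (forall j, (w j *m r) 0 0 \is a Num.int) ->
  semigroup_preimage b w x -> (x *m r) 0 0 \is a Num.int.
Proof.
move=> bZ wZ /semigroup_preimage_mulmx[k [z ->]].
by rewrite rpredD // rpred_sum // => i _; rewrite rpredM ?natr_int ?intr_int.
Qed.

Lemma semigroup_preimage_ge0 x :
  (forall i, (b i *m r) 0 0 = 0) -> (forall j, 0 <= (w j *m r) 0 0) ->
  semigroup_preimage b w x -> 0 <= (x *m r) 0 0.
Proof.
move=> b0 w0 /semigroup_preimage_mulmx[k [z ->]].
rewrite [X in _ + X]big1 ?addr0 => [|i _]; last by rewrite b0 mulr0.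
by apply: sumr_ge0 => j _; rewrite mulr_ge0.
Qed.

End SemigroupPreimage.

Section Corollary.
Variables (R : realType) (n t : nat) (htn : (t <= n)%N) (v : 'I_n.+1 -> 'rV[R]_n).

Let S := semigroup_preimage (fun i : 'I_t => v (widen_ord (leqW htn) i))
  (fun j : 'I_(n.+1 - t) => v (gen_idx j)).
Let A := \matrix_(i < n) v (widen_ord (leqnSn n) i).

Lemma row_A k : row k A = v (widen_ord (leqnSn n) k).
Proof. exact: rowK. Qed.

Lemma widen_ord_lift (k : 'I_n) : widen_ord (leqnSn n) k = lift ord_max k.
Proof. by apply: val_inj; rewrite /= /bump leqNgt ltn_ord. Qed.

Lemma ord_maxVwiden (i : 'I_n.+1) :
  i = ord_max \/ exists k, i = widen_ord (leqnSn n) k.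
Proof.
case: (unliftP ord_max i) => [k ->|->]; last by left.
by right; exists k; rewrite widen_ord_lift.
Qed.

Lemma widen_ord_lattice (i : 'I_t) :
  widen_ord (leqW htn) i = widen_ord (leqnSn n) (widen_ord htn i).
Proof. exact: val_inj. Qed.

Lemma not_dense_of_int_functional (r : 'cV[R]_n) : r != 0 ->
  (forall i, (v i *m r) 0 0 \is a Num.int) -> ~ dense S.
Proof.
move=> r0 vZ; apply: (not_dense_int (S := S) r0) => x.
by apply: semigroup_preimage_int => *; apply: vZ.
Qed.

(* A functional killing [v_1, ..., v_n] is integer-valued on [S] once scaled
   so that its value at [v_(n+1)] is [0] or [1]. *)
Lemma dense_row_full : dense S -> row_full A.
Proof.
move=> dS; apply/negPn/negP.
rewrite row_full_unit -unitmx_tr -row_free_unit -kermx_eq0.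
move=> /rowV0Pn[u /sub_kermxP uAT u_neq0].
have AuT : A *m u^T = 0 by rewrite -[A]trmxK -trmx_mul uAT trmx0.
have vu k : (v (widen_ord (leqnSn n) k) *m u^T) 0 0 = 0.
  by rewrite -row_A -row_mul AuT !mxE.
pose c := (v ord_max *m u^T) 0 0.
pose s := if c == 0 then 1 else c^-1.
apply: (@not_dense_of_int_functional (s *: u^T)) dS => [|i].
  rewrite scaler_eq0 trmx_eq0 (negbTE u_neq0) orbF /s.
  by case: (eqVneq c 0) => [_|c0]; rewrite ?oner_eq0 ?invr_eq0.
rewrite -scalemxAr mxE; case: (ord_maxVwiden i) => [->|[k ->]].
  by rewrite -/c /s; case: (eqVneq c 0) => [->|/mulVf->]; rewrite ?mulr0 ?rpred0 ?rpred1.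
by rewrite vu mulr0 rpred0.
Qed.

Lemma sum_mem_semigroup (C : 'I_n.+1 -> int) :
  (forall i : 'I_n.+1, (t <= i)%N -> (0 <= C i)%R) ->
  (exists2 i : 'I_n.+1, (t <= i)%N & C i != 0) ->
  S (\sum_i (C i)%:~R *: v i).
Proof.
move=> C_ge0 [i0 ti0 Ci0].
pose G k := (C (inord k))%:~R *: v (inord k).
have -> : \sum_i (C i)%:~R *: v i = \sum_(0 <= k < n.+1) G k.
  by rewrite big_mkord; apply: eq_bigr => i _; rewrite /G inord_val.
rewrite (big_cat_nat (n := t)) //=; last by rewrite leqW.
rewrite (_ : \sum_(t <= k < n.+1) G k = \sum_(j < n.+1 - t) G (j + t)%N); last first.
  by rewrite -{1}(add0n t) big_addn big_mkord.
rewrite big_mkord.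
exists (fun j => `|C (gen_idx j)|%N); split.
  have hj : (i0 - t < n.+1 - t)%N by have := ltn_ord i0; lia.
  exists (Ordinal hj).
  have -> : gen_idx (Ordinal hj) = i0 by apply: val_inj => /=; lia.
  by rewrite absz_eq0.
exists (\sum_(i < t) (C (widen_ord (leqW htn) i))%:~R *: v (widen_ord (leqW htn) i)).
  by exists (fun i => C (widen_ord (leqW htn) i)).
rewrite addrC; apply: f_equal2; apply: eq_bigr => j _; rewrite /G.
  have -> : inord (j + t) = gen_idx j.
    by apply: val_inj; rewrite /= inordK 1?addnC //; have := ltn_ord j; lia.
  by rewrite natr_absz ger0_norm // C_ge0 //= leq_addr.
suff -> : inord j = widen_ord (leqW htn) j by [].
by apply: val_inj; rewrite /= inordK //; have := ltn_ord j; lia.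
Qed.

Section Invertible.
Hypothesis unitA : A \in unitmx.

Definition last_coord i := (v ord_max *m invmx A) 0 i.

Lemma v_ord_max_coord :
  v ord_max = \sum_i last_coord i *: v (widen_ord (leqnSn n) i).
Proof.
rewrite -{1}(mulmxKV unitA (v ord_max)) mulmx_sum_row.
by apply: eq_bigr => i _; rewrite row_A.
Qed.

Lemma v_mul_invmx k (E : 'cV[R]_n) :
  (v (widen_ord (leqnSn n) k) *m (invmx A *m E)) 0 0 = E k 0.
Proof. by rewrite -row_A mulmxA -row_mul mulmxV // -row_mul mul1mx mxE. Qed.

Lemma v_ord_max_mul_invmx (E : 'cV[R]_n) :
  (v ord_max *m (invmx A *m E)) 0 0 = \sum_k last_coord k * E k 0.
Proof. by rewrite mulmxA mxE. Qed.

Lemma invmx_mul_neq0 (E : 'cV[R]_n) : E != 0 -> invmx A *m E != 0.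
Proof. by apply: contraNneq => AE0; rewrite -(mulKVmx unitA E) AE0 mulmx0. Qed.

Lemma dense_last_coord_lt0 : dense S ->
  forall j : 'I_n, (t <= j)%N -> last_coord j < 0.
Proof.
move=> dS j tj; rewrite ltNge; apply/negP => coord_ge0.
have delta_neq0 : delta_mx j 0 != 0 :> 'cV[R]_n.
  by apply/eqP => /matrixP/(_ j 0)/eqP; rewrite !mxE !eqxx oner_eq0.
apply: (not_dense_ge0 (invmx_mul_neq0 delta_neq0)) dS => x.
apply: semigroup_preimage_ge0 => [i|i].
  rewrite widen_ord_lattice v_mul_invmx mxE andbT (_ : (_ == j) = false) //.
  by apply/negbTE; rewrite -val_eqE /=; have := ltn_ord i; lia.
case: (ord_maxVwiden (gen_idx i)) => [->|[k ->]]; last by rewrite v_mul_invmx mxE ler0n.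
rewrite v_ord_max_mul_invmx (bigD1 j) //= big1 => [|k kj]; last first.
  by rewrite mxE (negbTE kj) mulr0.
by rewrite mxE !eqxx mulr1 addr0.
Qed.

Lemma dense_Q_lin_indep : dense S ->
  Q_lin_indep (fun i : 'I_n.+1 => if unlift ord0 i is Some j then last_coord j else 1).
Proof.
move=> dS; apply/Q_lin_indepZ => e he.
pose E : 'cV[R]_n := \col_k (e (lift ord0 k))%:~R.
have [E0|E_neq0] := eqVneq E 0; last first.
  exfalso; apply: (not_dense_of_int_functional (invmx_mul_neq0 E_neq0)) dS => i.
  case: (ord_maxVwiden i) => [->|[k ->]]; last by rewrite v_mul_invmx mxE intr_int.
  rewrite v_ord_max_mul_invmx (_ : \sum_k _ = - (e ord0)%:~R) ?rpredN ?intr_int //.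
  apply/eqP; rewrite -addr_eq0 addrC -[X in _ == X]he big_ord_recl unlift_none mulr1.
  by apply/eqP; congr (_ + _); apply: eq_bigr => k _; rewrite liftK mxE mulrC.
have e_lift k : e (lift ord0 k) = 0.
  by have /matrixP/(_ k 0)/eqP := E0; rewrite !mxE intr_eq0 => /eqP.
move=> i; case: (unliftP ord0 i) => [k ->|->]; first exact: e_lift.
move: he; rewrite big_ord_recl unlift_none mulr1 big1 ?addr0 => [/eqP|k _].
  by rewrite intr_eq0 => /eqP.
by rewrite liftK e_lift mul0r.
Qed.

Lemma dense_of_last_coord (al : 'I_n -> R) :
  v ord_max = \sum_i al i *: v (widen_ord (leqnSn n) i) ->
  (forall i : 'I_n, (t <= i)%N -> al i < 0) ->
  no_torus_character (fun _ : 'I_1 => al) -> dense S.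
Proof.
move=> vmax al_neg hal.
suff /(dense_mulmx unitA) dD : dense [set d | S (d *m A)].
  move=> O O0 oO; have [x [Ox [d Sd dx]]] := dD O O0 oO.
  by exists x; split; rewrite // -dx.
apply/dense_rVP => c e e0.
(* [Bd] bounds [(|c_k| + e) / |alpha_k|] for the [k >= t]; for [k < t] the
   term may be a junk value ([x / 0 = 0]), which is harmless. *)
pose Bd := \sum_i (`|c 0 i| + e) / `|al i|.
have [m Mm [p hp]] := kronecker_approx_nat hal (fun i => c 0 i) e0 (Num.truncn Bd).+1.
exists (\row_k ((p k)%:~R + m%:R * al k)) => [|k]; last first.
  by rewrite mxE distrC (addrC (p k)%:~R).
pose C i : int := if unlift ord_max i is Some k then p k else m%:Z.
rewrite /= mulmx_sum_row (_ : \sum_k _ = \sum_i (C i)%:~R *: v i).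
  apply: sum_mem_semigroup => [i ti|]; last first.
    by exists ord_max; rewrite /C ?unlift_none //=; lia.
  case: (ord_maxVwiden i) => [->|[k ik]]; first by rewrite /C unlift_none.
  rewrite ik /C widen_ord_lift liftK.
  have tk : (t <= k)%N by rewrite ik in ti.
  have al_k := al_neg k tk.
  have : (`|c 0 k| + e) / `|al k| < m%:R.
    apply: (@le_lt_trans _ _ Bd).
      rewrite /Bd (bigD1 k) //= lerDl; apply: sumr_ge0 => l _.
      by rewrite divr_ge0 // addr_ge0 // ltW.
    by apply: lt_le_trans (truncnS_gt Bd) _; rewrite ler_nat.
  rewrite (ltr0_norm al_k) ltr_pdivrMr ?oppr_gt0 // mulrN => hm.
  have := hp k; rewrite ltr_norml => /andP[hk _].
  have : 0 < (p k)%:~R :> R by have := ler_norm (- c 0 k); rewrite normrN; lra.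
  by rewrite ltr0z => /ltW.
rewrite [RHS]big_ord_recr /= {2}/C unlift_none vmax scaler_sumr -big_split /=.
apply: eq_bigr => k _; rewrite mxE row_A /C widen_ord_lift liftK.
by rewrite scalerDl scalerA -pmulrn.
Qed.

End Invertible.
End Corollary.

Theorem corollary4p7 (R : realType) (n t : nat) (htn : (t <= n)%N)
  (v : 'I_n.+1 -> 'rV[R]_n)
  (hGam : row_free (\matrix_(i < t) v (widen_ord (leqW htn) i))) :
  dense (semigroup_preimage
           (fun i : 'I_t => v (widen_ord (leqW htn) i))
           (fun j : 'I_(n.+1 - t) =>
              v (gen_idx j)))
  <->
  (row_free (\matrix_(i < n) v (widen_ord (leqnSn n) i)) /\
   row_full (\matrix_(i < n) v (widen_ord (leqnSn n) i))) /\
  (exists alpha : 'I_n -> R,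
     v ord_max = \sum_(i < n) alpha i *: v (widen_ord (leqnSn n) i) /\
     (forall i : 'I_n, (t <= i)%N -> alpha i < 0) /\
     Q_lin_indep (fun i : 'I_n.+1 =>
                    if unlift ord0 i is Some j then alpha j else 1)).
Proof.
split=> [dS | [[_ fullA] [al [vmax [al_neg Qal]]]]].
  have unitA := dense_row_full dS; rewrite row_full_unit in unitA.
  split; first by rewrite row_free_unit row_full_unit.
  exists (last_coord v); split; first exact: v_ord_max_coord unitA.
  by split; [exact: dense_last_coord_lt0 unitA dS | exact: dense_Q_lin_indep unitA dS].
rewrite row_full_unit in fullA.
exact: dense_of_last_coord fullA al vmax al_neg (Q_lin_indep_no_torus_character Qal).
Qed.
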